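(* Let $d\ge1$, let $P$ be a probability distribution on $\{0,1\}^d$ with $P(\nu)>0$ for all $\nu$, fix $\omega\in\{0,1\}^d$, and let $\mathcal{Q}_\omega:=\{y\in\mathbb{R}^d\mid A_\omega y\le b_\omega\}$, where $A_\omega$ is the $(2^d-1)\times d$ matrix with rows indexed by $\nu\in\{0,1\}^d\setminus\{\omega\}$, $A_\omega(\nu,i)=1$ if $\nu_i\ne\omega_i$ and $0$ otherwise, and $b_\omega(\nu)=\ln(P(\nu)/P(\omega))$. Let $f_\omega(y):=\prod_{i=1}^d(1+e^{y_i})$ for $y\in\mathbb{R}^d$. Let $F\subseteq\mathcal{Q}_\omega$ be a face of positive dimension and let $\hat y$ be a point in the relative interior of $F$. Then $f_\omega(\hat y)<\max_{y\in\mathcal{Q}_\omega}f_\omega(y)$. More specifically: (1) if the gradient $\nabla f_\omega(\hat y)$ is not orthogonal to $F$, then there is $\hat z\in F$ with $f_\omega(\hat z)>f_\omega(\hat y)$; (2) if $\nabla f_\omega(\hat y)$ is orthogonal to $F$, then $f_\omega(\hat y)$ is a local minimum of $f_\omega$ restricted to $F$.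
   Context: A face of $\mathcal{Q}_\omega$ is a nonempty set of the form $\{y\in\mathcal{Q}_\omega\mid A'_\omega y=b'_\omega\}$, where $A'_\omega$, $b'_\omega$ are the submatrix and subvector of $A_\omega$, $b_\omega$ formed by the same set of rows; its dimension is $d-\mathrm{rank}(A'_\omega)$. ''Orthogonal to $F$'' means orthogonal to every direction in the affine hull of $F$ (i.e. to $\{u-v: u,v\in F\}$). *)

From HB Require Import structures.
From mathcomp Require Import all_boot all_order all_algebra.
From mathcomp Require Import all_classical all_reals all_analysis.
Set Implicit Arguments. Unset Strict Implicit. Unset Printing Implicit Defensive.
Import Order.TTheory GRing.Theory Num.Theory.
Import numFieldNormedType.Exports.
Local Open Scope classical_set_scope.
Local Open Scope ring_scope.

(* The cube {0,1}^d, points nu with coordinates nu i : bool (true = 1). *)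
Definition cube (d : nat) := {ffun 'I_d -> bool}.

Definition dotr (R : realType) (d : nat) (u v : 'rV[R]_d) : R :=
  \sum_(i < d) u 0 i * v 0 i.

Definition Arow (R : realType) (d : nat) (omega nu : cube d) : 'rV[R]_d :=
  \row_i (if nu i != omega i then 1 else 0).

Definition bvec (R : realType) (d : nat) (P : cube d -> R) (omega nu : cube d) : R :=
  ln (P nu / P omega).

Definition Qset (R : realType) (d : nat) (P : cube d -> R) (omega : cube d)
  : set 'rV[R]_d :=
  [set y | forall nu : cube d, nu != omega ->
             dotr (Arow R omega nu) y <= bvec P omega nu].

Definition face_of (R : realType) (d : nat) (P : cube d -> R) (omega : cube d)
  (S : {set cube d}) : set 'rV[R]_d :=
  [set y | Qset P omega y /\
           forall nu, nu \in S -> dotr (Arow R omega nu) y = bvec P omega nu].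

Definition is_face (R : realType) (d : nat) (P : cube d -> R) (omega : cube d)
  (F : set 'rV[R]_d) : Prop :=
  exists S : {set cube d}, omega \notin S /\ F = face_of P omega S /\ F !=set0.

Definition eqset (R : realType) (d : nat) (P : cube d -> R) (omega : cube d)
  (F : set 'rV[R]_d) : {set cube d} :=
  [set nu | (nu != omega) &&
     `[< forall y, F y -> dotr (Arow R omega nu) y = bvec P omega nu >] ].

Definition subA (R : realType) (d : nat) (omega : cube d) (S : {set cube d})
  : 'M[R]_(#|S|, d) :=
  \matrix_(k < #|S|) Arow R omega (enum_val k).

Definition face_dim (R : realType) (d : nat) (P : cube d -> R) (omega : cube d)
  (F : set 'rV[R]_d) : nat :=
  (d - \rank (subA R omega (eqset P omega F)))%N.

Definition f_omega (R : realType) (d : nat) (y : 'rV[R]_d) : R :=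
  \prod_(i < d) (1 + expR (y 0 i)).

Definition grad (R : realType) (d : nat) (f : 'rV[R]_d -> R) (y : 'rV[R]_d)
  : 'rV[R]_d :=
  \row_i ('D_(delta_mx 0 i) f y).

Definition orth_to (R : realType) (d : nat) (g : 'rV[R]_d) (F : set 'rV[R]_d)
  : Prop :=
  forall u v, F u -> F v -> dotr g (u - v) = 0.

Definition aff_hull (R : realType) (d : nat) (F : set 'rV[R]_d) (y0 : 'rV[R]_d)
  : set 'rV[R]_d :=
  [set z | exists (n : nat) (c : 'I_n -> R) (u v : 'I_n -> 'rV[R]_d),
     (forall k, F (u k) /\ F (v k)) /\ z = y0 + \sum_(k < n) c k *: (u k - v k)].

Definition rel_interior (R : realType) (d : nat) (F : set 'rV[R]_d)
  : set 'rV[R]_d :=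
  [set y | F y /\ exists e : R, 0 < e /\
     forall z, aff_hull F y z -> `|z - y| < e -> F z].

From HB Require Import structures.
From mathcomp Require Import all_boot all_order all_algebra.
From mathcomp Require Import all_classical all_reals all_analysis.
From mathcomp Require Import ring.
Set Implicit Arguments. Unset Strict Implicit. Unset Printing Implicit Defensive.
Import Order.TTheory GRing.Theory Num.Theory.
Import numFieldNormedType.Exports.
Local Open Scope classical_set_scope.
Local Open Scope ring_scope.

(* log f_omega (y) = sum_i ln (1 + e^(y_i)) is convex, and strictly convex along
   every line, so f(y)^2 < f(y + v) f(y - v) for v <> 0.  A positive-dimensional
   face contains a point other than yh, and since yh is relatively interior,
   yh +- v lies in F for some small nonzero v: one of the two beats yh.  If the
   gradient is orthogonal to F, the tangent bound for log f gives
   f(z) >= f(yh) exp <grad log f(yh), z - yh> = f(yh) on the whole of F.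
   The maximum over Q_omega exists because A_omega >= 0 has the unit vectors
   among its rows: these bound every coordinate above, and raising the
   coordinates below a large -M up to -M stays in Q_omega and increases f, so
   it suffices to maximise over a compact box. *)

Section Softplus.
Variable R : realType.

Definition logistic (a : R) : R := expR a / (1 + expR a).

Lemma onePexpR_gt0 (a : R) : 0 < 1 + expR a.
Proof. by rewrite ltr_wpDr ?expR_ge0. Qed.

Lemma onePexpR_tangent (a h : R) :
  (1 + expR a) * expR (logistic a * h) <= 1 + expR (a + h).
Proof.
rewrite /logistic; set E := expR a; set s := E / (1 + E).
have E1 : 1 + E != 0 by rewrite gt_eqF ?onePexpR_gt0.
have -> : 1 + expR (a + h) =
    expR (s * h) * (expR (- (s * h)) + E * expR ((1 - s) * h)).
  rewrite mulrDr -expRD addrN expR0 mulrCA -expRD expRD /E.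
  by congr (_ + _ * expR _); ring.
rewrite [X in X <= _]mulrC ler_pM2l ?expR_gt0 //.
(* [1 + x <= e^x] at [x = - s h] and at [x = (1 - s) h] *)
have -> : 1 + E = (1 + - (s * h)) + E * (1 + (1 - s) * h) by rewrite /s; field.
by rewrite lerD ?expR_ge1Dx // ler_pM2l ?expR_gt0 ?expR_ge1Dx.
Qed.

Lemma onePexpR_midpoint_lt (a h : R) : h != 0 ->
  (1 + expR a) ^+ 2 < (1 + expR (a + h)) * (1 + expR (a - h)).
Proof.
move=> h0; rewrite !expRD expRN -subr_gt0.
have x0 : 0 < expR h := expR_gt0 h.
have x1 : expR h != 1 by rewrite -expR0 (inj_eq (@expR_inj R)).
have -> : (1 + expR a * expR h) * (1 + expR a * (expR h)^-1) - (1 + expR a) ^+ 2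
    = expR a * ((expR h - 1) ^+ 2 / expR h) by field; rewrite gt_eqF.
by rewrite mulr_gt0 ?expR_gt0 // divr_gt0 // exprn_even_gt0 // subr_eq0.
Qed.

End Softplus.

Lemma ltr_prod_le_lt (R : numDomainType) (I : finType) (F G : I -> R) (k : I) :
  (forall i, 0 < F i <= G i) -> F k < G k -> \prod_i F i < \prod_i G i.
Proof.
move=> FG ltFGk; rewrite (bigD1 k) //= [ltRHS](bigD1 k) //=.
have F0 i : 0 < F i by case/andP: (FG i).
apply: (@lt_le_trans _ _ (G k * \prod_(i | i != k) F i)).
  by rewrite ltr_pM2r ?prodr_gt0.
rewrite ler_pM2l ?(lt_trans (F0 k)) //.
by apply: ler_prod => i _; case/andP: (FG i) => /ltW ->.
Qed.

Lemma derive_along_line (R : numFieldType) (V W : normedModType R)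
    (f : V -> W) (a v : V) :
  'D_v f a = 'D_1 (fun h : R => f (h *: v + a)) 0.
Proof.
rewrite /derive; set g := (fun h => _); set g' := (fun h => _).
suff -> : g = g' by [].
by apply: funext => h; rewrite /g /g' /= scale0r !add0r addr0 [h *: 1]mulr1.
Qed.

Section FOmega.
Variables (R : realType) (d : nat).
Implicit Types y h v : 'rV[R]_d.

Local Notation f := (@f_omega R d).

Lemma f_omega_gt0 y : 0 < f y.
Proof. by apply: prodr_gt0 => i _; apply: onePexpR_gt0. Qed.

Lemma f_omega_midpoint_lt y v : v != 0 -> f y ^+ 2 < f (y + v) * f (y - v).
Proof.
move=> v0; have [k vk0] : exists k, v 0 k != 0.
  apply/existsP; apply: contraR v0 => /existsPn vk.
  by apply/eqP/rowP => k; rewrite mxE; apply/eqP/negPn.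
rewrite /f_omega -prodrXl -big_split /=.
apply: (ltr_prod_le_lt (k := k)) => [i|].
  rewrite !mxE exprn_gt0 ?onePexpR_gt0 //=.
  have [->|vi0] := eqVneq (v 0 i) 0; first by rewrite oppr0 !addr0 expr2.
  exact/ltW/onePexpR_midpoint_lt.
by rewrite !mxE onePexpR_midpoint_lt.
Qed.

Lemma f_omega_lt_shift y v : v != 0 -> f y < f (y + v) \/ f y < f (y - v).
Proof.
move=> /(f_omega_midpoint_lt y); rewrite expr2.
case: (ltP (f y) (f (y + v))) => [|le_yv]; first by left.
case: (ltP (f y) (f (y - v))) => [|le_ymv]; first by right.
by move=> /lt_geF; rewrite ler_pM // ltW ?f_omega_gt0.
Qed.

Lemma f_omega_tangent y h :
  f y * expR (\sum_i logistic (y 0 i) * h 0 i) <= f (y + h).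
Proof.
rewrite expR_sum /f_omega -big_split /=; apply: ler_prod => i _.
by rewrite mxE mulr_ge0 ?expR_ge0 ?onePexpR_tangent // ltW ?onePexpR_gt0.
Qed.

Lemma grad_f_omega y : grad f y = f y *: \row_i logistic (y 0 i).
Proof.
apply/rowP => i; rewrite !mxE derive_along_line.
set C := \prod_(j | j != i) (1 + expR (y 0 j)).
have -> : (fun t : R => f (t *: delta_mx 0 i + y)) =
          (fun t => C + (C * expR (y 0 i)) * expR t).
  apply: funext => t; rewrite /f_omega (bigD1 i) //= !mxE !eqxx mulr1 expRD.
  rewrite (eq_bigr (fun j => 1 + expR (y 0 j))) /C; first by ring.
  by move=> j ji; rewrite !mxE (negbTE ji) mulr0 add0r.
rewrite derive_val expR0 add0r mul1r [_ *: _]mulr1.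
rewrite /logistic /f_omega (bigD1 i) //= -/C.
by field; rewrite gt_eqF ?onePexpR_gt0.
Qed.

Lemma dotr_grad_f_omega y h :
  dotr (grad f y) h = f y * \sum_i logistic (y 0 i) * h 0 i.
Proof.
rewrite grad_f_omega /dotr mulr_sumr.
by apply: eq_bigr => i _; rewrite !mxE mulrA.
Qed.

Lemma f_omega_min_of_orth_grad (F : set 'rV[R]_d) y :
  F y -> orth_to (grad f y) F -> forall z, F z -> f y <= f z.
Proof.
move=> Fy orth z Fz; have := orth z y Fz Fy.
rewrite dotr_grad_f_omega => /eqP.
rewrite mulf_eq0 gt_eqF ?f_omega_gt0 //= => /eqP sum0.
by have := f_omega_tangent y (z - y); rewrite sum0 expR0 mulr1 addrC subrK.
Qed.

Lemma continuous_f_omega : continuous f.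
Proof.
apply: continuous_big; first exact: mul_continuous.
move=> i _ y.
have -> : (fun z : 'rV[R]_d => 1 + expR (z 0 i)) =
    (cst 1 + (fun z : 'rV[R]_d => expR (z 0 i))) by [].
apply: continuousD; first exact: cst_continuous.
by apply: continuous_comp; [exact: coord_continuous | exact: continuous_expR].
Qed.

End FOmega.

Section Dotr.
Variables (R : realType) (d : nat).
Implicit Types a y z : 'rV[R]_d.

Lemma dotrD a y z : dotr a (y + z) = dotr a y + dotr a z.
Proof.
by rewrite /dotr -big_split; apply: eq_bigr => i _; rewrite mxE mulrDr.
Qed.

Lemma dotrZ a y (t : R) : dotr a (t *: y) = t * dotr a y.
Proof. by rewrite /dotr mulr_sumr; apply: eq_bigr => i _; rewrite mxE mulrCA. Qed.

Lemma continuous_dotr a : continuous (dotr a).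
Proof.
apply: continuous_big; first exact: add_continuous.
move=> i _ y; apply: (@continuousM _ _ (cst (a 0 i)) (fun z : 'rV[R]_d => z 0 i)).
  exact: cst_continuous.
exact: coord_continuous.
Qed.

End Dotr.

Lemma rel_interior_segment (R : realType) (d : nat) (F : set 'rV[R]_d) y a b :
  rel_interior F y -> F a -> F b ->
  exists2 s : R, 0 < s & F (y + s *: (b - a)) /\ F (y - s *: (b - a)).
Proof.
case=> _ [e [e0 near_y]] Fa Fb; set w := b - a.
pose s := e / (`|w| + 1).
have s0 : 0 < s by rewrite divr_gt0 // ltr_wpDl.
have sw : `|s *: w| < e.
  rewrite normrZ gtr0_norm // /s mulrAC ltr_pdivrMr ?ltr_wpDl //.
  by rewrite ltr_pM2l // ltrDl.
have hull c : aff_hull F y (y + c *: w).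
  by exists 1%N, (fun=> c), (fun=> b), (fun=> a); rewrite big_ord1.
exists s => //; split; [|rewrite -scaleNr]; apply: near_y => //.
  by rewrite addrC addKr.
by rewrite addrC addKr scaleNr normrN.
Qed.

Section Faces.
Variables (R : realType) (d : nat) (P : cube d -> R) (omega : cube d).
Implicit Types (F : set 'rV[R]_d) (y u : 'rV[R]_d).

Local Notation A := (Arow R omega).
Local Notation b := (bvec P omega).
Local Notation E := (eqset P omega).

Lemma face_sub_Qset F : is_face P omega F -> F `<=` Qset P omega.
Proof. by case=> S [_ [-> _]] y []. Qed.

Lemma face_dim_gt0_kernel F : (0 < face_dim P omega F)%N ->
  exists2 u, u != 0 & forall nu, nu \in E F -> dotr (A nu) u = 0.
Proof.
rewrite /face_dim subn_gt0 => rkA.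
have : kermx (subA R omega (E F))^T != 0.
  by rewrite -mxrank_eq0 mxrank_ker mxrank_tr subn_eq0 -ltnNge.
case/rowV0Pn => u /sub_kermxP uA u0; exists u => // nu nuE.
have := congr1 (fun w : 'rV[R]_#|E F| => w 0 (enum_rank_in nuE nu)) uA.
rewrite !mxE => <-; apply: eq_bigr => i _.
by rewrite !mxE enum_rankK_in // mulrC.
Qed.

Lemma face_shift F y u : is_face P omega F -> F y ->
  (forall nu, nu \in E F -> dotr (A nu) u = 0) ->
  (forall nu, nu != omega -> nu \notin E F -> dotr (A nu) y < b nu) ->
  exists2 t : R, 0 < t & F (y + t *: u).
Proof.
case=> S [omegaS [FE _]] Fy uE slack.
pose room nu := if (nu != omega) && (nu \notin E F)
  then (b nu - dotr (A nu) y) / (`|dotr (A nu) u| + 1) else 1.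
pose t := \big[Order.min/1]_nu room nu.
have t0 : 0 < t.
  apply: lt_bigmin => // nu _; rewrite /room; case: ifP => // /andP[nuo nuE].
  by rewrite divr_gt0 ?subr_gt0 ?slack // ltr_wpDl.
exists t => //.
have SE : {subset S <= E F}.
  move=> nu nuS; rewrite inE; apply/andP; split.
    by apply: contraNneq omegaS => <-.
  by apply/asboolP => z; rewrite FE => -[_]; apply.
move: Fy; rewrite FE => -[Qy Sy].
split => [nu nuo|nu nuS]; rewrite dotrD dotrZ; last first.
  by rewrite uE ?SE // mulr0 addr0 Sy.
have [nuE|nuE] := boolP (nu \in E F); first by rewrite uE // mulr0 addr0 Qy.
have : t <= room nu by apply: bigmin_le.
rewrite /room nuo nuE /= ler_pdivlMr ?ltr_wpDl // => troom.
rewrite -lerBrDl (le_trans (ler_norm _)) // normrM gtr0_norm //.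
by rewrite (le_trans _ troom) // ler_pM2l // lerDl.
Qed.

Lemma face_dim_gt0_exists_other F y : is_face P omega F ->
  (0 < face_dim P omega F)%N -> F y -> exists2 z, F z & z != y.
Proof.
move=> faceF dimF Fy; apply: contrapT => noz.
have Fy1 z : F z -> z = y.
  by move=> Fz; apply: contrapT => /eqP zy; apply: noz; exists z.
have [u u0 uE] := face_dim_gt0_kernel dimF.
have slack nu : nu != omega -> nu \notin E F -> dotr (A nu) y < b nu.
  move=> nuo; rewrite inE nuo /= => /asboolPn tight.
  rewrite lt_neqAle (face_sub_Qset faceF Fy nuo) andbT.
  by apply/eqP => Ay; apply: tight => z /Fy1 ->.
have [t t0 /Fy1 /eqP] := face_shift faceF Fy uE slack.
rewrite -[X in _ == X]addr0 (inj_eq (addrI y)) scaler_eq0.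
by rewrite (negbTE u0) orbF gt_eqF.
Qed.

Lemma rel_interior_face_not_argmax F y : is_face P omega F ->
  (0 < face_dim P omega F)%N -> rel_interior F y ->
  exists2 z, F z & f_omega y < f_omega z.
Proof.
move=> faceF dimF yint; have Fy := yint.1.
have [a Fa ay] := face_dim_gt0_exists_other faceF dimF Fy.
have [s s0 [Fp Fm]] := rel_interior_segment yint Fy Fa.
have v0 : s *: (a - y) != 0 by rewrite scaler_eq0 gt_eqF // subr_eq0.
have [lt_yp|lt_ym] := f_omega_lt_shift y v0.
  by exists (y + s *: (a - y)).
by exists (y - s *: (a - y)).
Qed.

End Faces.

Section Maximum.
Variables (R : realType) (d : nat) (P : cube d -> R) (omega : cube d).
Implicit Types y : 'rV[R]_d.

Local Notation A := (Arow R omega).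
Local Notation b := (bvec P omega).
Local Notation Q := (Qset P omega).

Definition flip_bit (i : 'I_d) : cube d :=
  [ffun j => if j == i then ~~ omega j else omega j].

Lemma flip_bit_neq i : flip_bit i != omega.
Proof.
apply/eqP => /(congr1 (fun nu : cube d => nu i)).
by rewrite ffunE eqxx; case: (omega i).
Qed.

Lemma dotr_Arow_flip_bit i y : dotr (A (flip_bit i)) y = y 0 i.
Proof.
rewrite /dotr (bigD1 i) //= big1 ?addr0 => [|j ji]; rewrite !mxE ffunE ?eqxx.
  by case: (omega i); rewrite mul1r.
by rewrite (negbTE ji) eqxx mul0r.
Qed.

Let B := \sum_nu `|b nu|.

(* a row meeting a coordinate clamped at [- M] sums to at most
   [(d - 1) B - M = - B] *)
Let M := d%:R * B.

Lemma normr_bvec_le nu : `|b nu| <= B.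
Proof. by rewrite /B (bigD1 nu) //= lerDl sumr_ge0. Qed.

Lemma sum_normr_bvec_ge0 : 0 <= B.
Proof. exact: le_trans (normr_ge0 _) (normr_bvec_le omega). Qed.

Lemma Qset_coord_le y i : Q y -> y 0 i <= B.
Proof.
move=> /(_ _ (flip_bit_neq i)); rewrite dotr_Arow_flip_bit => /le_trans; apply.
exact: le_trans (ler_norm _) (normr_bvec_le _).
Qed.

Definition clamp (m : R) y : 'rV[R]_d := \row_i Order.max (y 0 i) m.

Lemma f_omega_le_clamp m y : f_omega y <= f_omega (clamp m y).
Proof.
apply: ler_prod => i _; rewrite mxE ltW ?onePexpR_gt0 //=.
by rewrite lerD2l ler_expR le_max lexx.
Qed.

Lemma Qset_clamp y : Q y -> Q (clamp (- M) y).
Proof.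
move=> Qy nu nuo.
have B0 := sum_normr_bvec_ge0.
have clampB i : Order.max (y 0 i) (- M) <= B.
  by rewrite ge_max Qset_coord_le //= (le_trans _ B0) // oppr_le0 mulr_ge0.
have [[k nuk yk]|noclamp] :=
  pselect (exists2 k, nu k != omega k & y 0 k < - M); last first.
  suff -> : dotr (A nu) (clamp (- M) y) = dotr (A nu) y by apply: Qy.
  apply: eq_bigr => i _; rewrite !mxE; case: ifP => nui; rewrite ?mul0r //.
  by rewrite max_l // leNgt; apply/negP => yi; apply: noclamp; exists i.
apply: (@le_trans _ _ (\sum_(i < d) (B - (i == k)%:R * (M + B)))).
  apply: ler_sum => i _; rewrite !mxE.
  have [->|ik] := eqVneq i k.
    by rewrite nuk !mul1r opprD addrCA subrr addr0 (max_r (ltW yk)).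
  by rewrite mul0r subr0; case: ifP => _; rewrite ?mul0r ?mul1r.
have -> : \sum_(i < d) (B - (i == k)%:R * (M + B)) = - B.
  rewrite big_split /= sumr_const card_ord sumrN (bigD1 k) //= eqxx mul1r.
  rewrite big1 => [|j jk]; last by rewrite (negbTE jk) mul0r.
  by rewrite addr0 /M mulr_natl opprD addrA subrr sub0r.
by rewrite lerNl (le_trans _ (normr_bvec_le nu)) // -normrN ler_norm.
Qed.

Lemma closed_Qset : closed Q.
Proof.
have -> : Q = \bigcap_(nu in [set nu | nu != omega])
    (dotr (A nu) @^-1` [set x | x <= b nu]).
  by rewrite predeqE => y; split => Qy nu; apply: Qy.
apply: closed_bigI => nu _; apply: closed_comp => [y _|]; last exact: closed_le.
exact: continuous_dotr.
Qed.

Lemma Qset_max y0 : Q y0 ->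
  exists ymax, Q ymax /\ forall y, Q y -> f_omega y <= f_omega ymax.
Proof.
move=> Qy0.
pose box := [set v : 'rV[R]_d | forall i, `[- M, B]%classic (v 0 i)].
have clamp_box y : Q y -> box (clamp (- M) y).
  move=> Qy i; rewrite /= in_itv /= mxE le_max lexx orbT ge_max Qset_coord_le //=.
  by rewrite (le_trans _ sum_normr_bvec_ge0) // oppr_le0 mulr_ge0 ?sum_normr_bvec_ge0.
have [c /set_mem[_ Qc] cmax] : exists2 c, c \in box `&` Q &
    forall t, t \in box `&` Q -> f_omega t <= f_omega c.
  apply: compact_EVT_max.
  - by exists (clamp (- M) y0); split; [apply: clamp_box | apply: Qset_clamp].
  - apply: compact_closedI closed_Qset.
    apply: (@rV_compact _ _ (fun=> `[- M, B]%classic)) => _.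
    exact: segment_compact.
  - exact: continuous_subspaceT (@continuous_f_omega R d).
exists c; split => // y Qy; apply: le_trans (f_omega_le_clamp (- M) y) (cmax _ _).
by apply: mem_set; split; [apply: clamp_box | apply: Qset_clamp].
Qed.

End Maximum.

Unset Implicit Arguments.

Theorem lemma5 (R : realType) (d : nat) (hd : (1 <= d)%N)
  (P : cube d -> R) (hPpos : forall nu, 0 < P nu)
  (hPsum : \sum_(nu : cube d) P nu = 1)
  (omega : cube d) (F : set 'rV[R]_d)
  (hF : is_face P omega F) (hdim : (0 < face_dim P omega F)%N)
  (yh : 'rV[R]_d) (hyh : rel_interior F yh) :
  (exists ymax, Qset P omega ymax /\
     (forall y, Qset P omega y -> f_omega y <= f_omega ymax) /\
     f_omega yh < f_omega ymax)
  /\ (~ orth_to (grad (@f_omega R d) yh) F ->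
        exists zh, F zh /\ f_omega yh < f_omega zh)
  /\ (orth_to (grad (@f_omega R d) yh) F ->
        exists e : R, 0 < e /\
          forall z, F z -> `|z - yh| < e -> f_omega yh <= f_omega z).
Proof.
have Fyh := hyh.1; have FQ := face_sub_Qset hF.
have [zh Fzh yz] := rel_interior_face_not_argmax hF hdim hyh.
split; last split.
- have [ymax [Qmax maxQ]] := Qset_max (FQ _ Fyh).
  by exists ymax; do 2!split => //; apply: lt_le_trans yz (maxQ _ (FQ _ Fzh)).
- by exists zh.
- move=> orth; exists 1; split => // z Fz _.
  exact: f_omega_min_of_orth_grad Fyh orth z Fz.
Qed.
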